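(* Let $\delta>0$ and let $A$ be a deterministic priority mechanism that processes bidders and is truthful without money and with verification for CAs with known $2$-minded bidders. Then the approximation ratio of $A$ on instances with $m$ goods is greater than $(1-\delta)m/2$.
   Context: Combinatorial auction with a set $\mathsf U$ of $m$ goods (single copy each) and bidders; bidder $i$ has a public collection $\mathcal S_i$ of $2$ nonempty subsets of $\mathsf U$ (known $2$-minded bidders) and a private valuation $v_i:\mathcal S_i\to\mathbb R_{\ge0}$, extended to all subsets $T$ by $v_i(T)=\max\{v_i(S'):S'\in\mathcal S_i,S'\subseteq T\}$ ($0$ if none). Truthfulness without money and with verification (known bidders) means: for all $i$, $\mathbf b_{-i}$, true $v_i$ and declarations $b_i$ with $b_i(A_i(b_i,\mathbf b_{-i}))\le v_i(A_i(b_i,\mathbf b_{-i}))$, $v_i(A_i(v_i,\mathbf b_{-i}))\ge v_i(A_i(b_i,\mathbf b_{-i}))$. Priority mechanism processing bidders: the input is a finite set $I$ of items $(i,v_i)$ (a bidder together with her declared valuation function), drawn from the class $\mathcal I$ of all such items. The mechanism proceeds in rounds; in each round, without looking at the unprocessed items, it chooses a total order on $\mathcal I$ (possibly depending on items processed and decisions made so far), receives the first unprocessed item $(i,v_i)$ of $I$ in this order, and irrevocably decides a (possibly empty) set $S$ allocated to $i$, collecting welfare $v_i(S)$. The output must be feasible (allocated sets pairwise disjoint). Approximation ratio $\alpha$: welfare $\ge\mathrm{OPT}/\alpha$ on every input, $\mathrm{OPT}$ being the maximum welfare of a feasible allocation. *)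

From HB Require Import structures.
From mathcomp Require Import all_boot all_order all_algebra.
Set Implicit Arguments. Unset Strict Implicit. Unset Printing Implicit Defensive.
Import Order.TTheory GRing.Theory Num.Theory.
Local Open Scope ring_scope.

Section Auction.
Variables (R : realFieldType) (m : nat).

(* Goods: U = 'I_m.  A bidder is an identity together with her public
   collection {S1, S2} of two subsets of U. *)
Definition bidder := (nat * {set 'I_m} * {set 'I_m})%type.
Definition bS1 (b : bidder) : {set 'I_m} := b.1.2.
Definition bS2 (b : bidder) : {set 'I_m} := b.2.

Definition valid_bidder (b : bidder) : bool :=
  [&& bS1 b != set0, bS2 b != set0 & bS1 b != bS2 b].

(* A valuation v : {S1,S2} -> R_{>=0} is the pair (v S1, v S2).
   An item is (bidder, declared valuation). *)
Definition item := (bidder * (R * R))%type.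

Definition valid_item (x : item) : bool :=
  [&& valid_bidder x.1, 0 <= x.2.1 & 0 <= x.2.2].

Definition value (b : bidder) (v : R * R) (T : {set 'I_m}) : R :=
  Num.max (Num.max (if bS1 b \subset T then v.1 else 0)
                   (if bS2 b \subset T then v.2 else 0)) 0.

Definition valid_instance (I : seq item) : bool :=
  all valid_item I && uniq (map fst I).

(* History: processed items with the set allocated to each. *)
Definition history := seq (item * {set 'I_m}).

(* A deterministic priority mechanism: in each round the order depends only on
   the history; the decision depends on the history and the received item. *)
Record mechanism := Mechanism {
  mord : history -> item -> item -> bool;   (* strict order: mord h x y = "x before y" *)
  mdec : history -> item -> {set 'I_m} }.

Definition strict_total_on (r : item -> item -> bool) : Prop :=
  [/\ forall x, valid_item x -> ~~ r x x,
      forall x y z, valid_item x -> valid_item y -> valid_item z ->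
        r x y -> r y z -> r x z
    & forall x y, valid_item x -> valid_item y -> x != y -> r x y || r y x].

(* run A I h h' : starting from history h with unprocessed items I,
   the mechanism terminates with history h'. *)
Inductive run (A : mechanism) : seq item -> history -> history -> Prop :=
| run_nil h : run A [::] h h
| run_step I h h' x :
    x \in I ->
    (forall y, y \in I -> y != x -> mord A h x y) ->
    run A (rem x I) (rcons h (x, mdec A h x)) h' ->
    run A I h h'.

Definition alloc (H : history) (b : bidder) : {set 'I_m} :=
  if [seq p <- H | p.1.1 == b] is p :: _ then p.2 else set0.

(* welfare collected (w.r.t. declared valuations) *)
Definition hist_welfare (H : history) : R :=
  \sum_(p <- H) value p.1.1 p.1.2 p.2.

Definition feasible_hist (H : history) : bool :=
  pairwise (fun p q : item * {set 'I_m} => [disjoint p.2 & q.2]) H.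

Definition item0 : item := ((0%N, set0, set0), (0, 0)).

Definition alloc_feasible (I : seq item) (f : {ffun 'I_(size I) -> {set 'I_m}}) : bool :=
  [forall k, forall l, (k != l) ==> [disjoint f k & f l]].

Definition OPT (I : seq item) : R :=
  \big[Num.max/0]_(f : {ffun 'I_(size I) -> {set 'I_m}} | alloc_feasible f)
     \sum_(k < size I) value (nth item0 I k).1 (nth item0 I k).2 (f k).

Definition is_priority_mechanism (A : mechanism) : Prop :=
  (forall h, strict_total_on (mord A h)) /\
  (forall I H, valid_instance I -> run A I [::] H -> feasible_hist H).

Definition truthful_verif (A : mechanism) : Prop :=
  forall (b : bidder) (others : seq item) (v d : R * R) (Hv Hd : history),
    valid_instance ((b, v) :: others) -> valid_instance ((b, d) :: others) ->
    run A ((b, d) :: others) [::] Hd ->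
    run A ((b, v) :: others) [::] Hv ->
    value b d (alloc Hd b) <= value b v (alloc Hd b) ->
    value b v (alloc Hd b) <= value b v (alloc Hv b).

End Auction.

From HB Require Import structures.
From mathcomp Require Import all_boot all_order all_algebra.
Import Order.TTheory GRing.Theory Num.Theory.
Set Implicit Arguments. Unset Strict Implicit. Unset Printing Implicit Defensive.
Local Open Scope ring_scope.

(* Let bidder g (one per good g) have the public sets {g} and U,
   and write item_of c g for bidder g declaring value c for {g} and 2 for U.
   Run A on the instance I = (item_of 1 g)_g.  The first item processed is
   some item_of 1 g, and A decides its allocation looking only at that item.
   - If A gives it all of U, feasibility leaves nothing for the others, so the
     welfare is 2, while giving each bidder its own good yields OPT >= m; since
     (1 - delta) m / 2 * 2 < m the ratio exceeds (1 - delta) m / 2.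
   - Otherwise, truthfulness with verification forces A to refuse U also to
     the lone item item_of 0 g (lying "0" would otherwise win the whole of U),
     so on the one-bidder instance [item_of 0 g] A collects 0 < 2 = OPT. *)

Section Runs.
Variables (R : realFieldType) (m : nat) (A : mechanism R m).

Lemma strict_total_min (r : item R m -> item R m -> bool) (s : seq (item R m)) :
  strict_total_on r -> all (@valid_item R m) s -> s != [::] ->
  exists2 x, x \in s & forall y, y \in s -> y != x -> r x y.
Proof.
move=> [_ tr tot]; elim: s => [//|a s IH] /= /andP[va vs] _.
have [-> | sne] := altP (s =P [::]).
  by exists a => [|y]; rewrite inE // => /eqP ->; rewrite eqxx.
have [x xs xmin] := IH vs sne.
have vx : valid_item x by move/allP: vs; apply.
case rax: (r a x).
- exists a => [|y]; first by rewrite inE eqxx.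
  rewrite inE => /orP[/eqP -> |ys]; first by rewrite eqxx.
  move=> _; have [-> //|yx] := altP (y =P x).
  have vy : valid_item y by move/allP: vs; apply.
  exact: tr a x y va vx vy rax (xmin y ys yx).
- exists x => [|y]; first by rewrite inE xs orbT.
  rewrite inE => /orP[/eqP -> |ys] yx; last exact: xmin.
  by move: (tot x a vx va); rewrite eq_sym yx rax orbF; apply.
Qed.

Hypothesis A_total : forall h, strict_total_on (mord A h).

Lemma run_total (I : seq (item R m)) (h : history R m) :
  all (@valid_item R m) I -> exists H, run A I h H.
Proof.
have [n] := ubnP (size I); elim: n I h => // n IH I h /ltnSE sI vI.
have [-> | ne] := altP (I =P [::]); first by exists h; constructor.
have [x xI xmin] := @strict_total_min _ _ (A_total h) vI ne.
have sIx : (size (rem x I) < n)%N.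
  by rewrite size_rem // -ltnS prednK // lt0n size_eq0.
have vIx : all (@valid_item R m) (rem x I).
  by apply/allP => y /mem_rem yI; move/allP: vI; apply.
have [H HH] := IH _ (rcons h (x, mdec A h x)) sIx vIx.
by exists H; exact: run_step xI xmin HH.
Qed.

End Runs.

Lemma run_first (R : realFieldType) (m : nat) (A : mechanism R m)
    (I : seq (item R m)) (h H : history R m) :
  run A I h H -> I != [::] ->
  exists2 x, x \in I & exists t, H = h ++ (x, mdec A h x) :: t /\
                                 forall p, p \in t -> p.1 \in I.
Proof.
case=> [h0 //| I0 h0 H0 x xI _ Hr _]; exists x => //.
suff [t [-> tI]] : exists t, H0 = rcons h0 (x, mdec A h0 x) ++ t /\
                            forall p, p \in t -> p.1 \in rem x I0.
  by exists t; split => [|p /tI /mem_rem //]; rewrite cat_rcons.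
elim: Hr => [h1 | I1 h1 h2 y yI _ _ [t [-> tI]]]; first by exists [::]; rewrite cats0.
exists ((y, mdec A h1 y) :: t); split; first by rewrite cat_rcons.
by move=> p; rewrite inE => /orP[/eqP -> // | /tI /mem_rem].
Qed.

Lemma run_single (R : realFieldType) (m : nat) (A : mechanism R m) (x : item R m) :
  run A [:: x] [::] [:: (x, mdec A [::] x)].
Proof.
apply: (run_step (x := x)); first by rewrite inE.
  by move=> y; rewrite inE => ->.
by rewrite /= eqxx; constructor.
Qed.

Section Welfare.
Variables (R : realFieldType) (m : nat).

Lemma value_set0 (b : bidder m) (v : R * R) : valid_bidder b -> value b v set0 = 0.
Proof.
by case/and3P => h1 h2 _; rewrite /value !subset0 (negbTE h1) (negbTE h2) !maxxx.
Qed.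

Lemma hist_welfare_grab (x : item R m) (t : history R m) :
  feasible_hist ((x, [set: 'I_m]) :: t) ->
  (forall p, p \in t -> valid_bidder p.1.1) ->
  hist_welfare ((x, [set: 'I_m]) :: t) = value x.1 x.2 [set: 'I_m].
Proof.
rewrite /feasible_hist /hist_welfare pairwise_cons big_cons => /andP[/allP dis _] vt.
rewrite big1_seq ?addr0 // => p /andP[_ pt].
have p0 : p.2 = set0.
  by apply/eqP; rewrite -subset0 -setCS setC0 -disjoints_subset; exact: dis.
by rewrite p0 value_set0 ?vt.
Qed.

Lemma OPT_ge {I : seq (item R m)} {f : {ffun 'I_(size I) -> {set 'I_m}}} :
  alloc_feasible f ->
  \sum_(k < size I) value (nth (item0 R m) I k).1 (nth (item0 R m) I k).2 (f k)
    <= OPT I.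
Proof. by move=> ff; apply: le_bigmax_cond. Qed.

Lemma OPT_single (x : item R m) : value x.1 x.2 [set: 'I_m] <= OPT [:: x].
Proof.
pose f : {ffun 'I_1 -> {set 'I_m}} := [ffun => [set: 'I_m]].
have ff : @alloc_feasible R m [:: x] f.
  by apply/forallP => k; apply/forallP => l; rewrite (ord1 k) (ord1 l) eqxx.
by apply: le_trans (OPT_ge ff); rewrite big_ord1 ffunE.
Qed.

End Welfare.

Section HardInstance.
Variables (R : realFieldType) (m : nat).
Hypothesis hm : (2 <= m)%N.

Definition bid (g : 'I_m) : bidder m := (nat_of_ord g, [set g], [set: 'I_m]).

Definition item_of (c : R) (g : 'I_m) : item R m := (bid g, (c, 2)).

Definition hard_instance : seq (item R m) := [seq item_of 1 g | g <- enum 'I_m].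

Lemma valid_bid (g : 'I_m) : valid_bidder (bid g).
Proof.
rewrite /valid_bidder /bS1 /bS2 /=; apply/and3P; split;
  try by apply/set0Pn; exists g; rewrite !inE.
apply/eqP => E; have := cardsT 'I_m; rewrite -E cards1 card_ord => E1.
by move: hm; rewrite -E1.
Qed.

Lemma valid_item_of (c : R) (g : 'I_m) : 0 <= c -> valid_item (item_of c g).
Proof. by move=> c0; rewrite /valid_item /= valid_bid c0 ler0n. Qed.

Lemma value_bid_setT (g : 'I_m) (c : R) : 0 <= c <= 2 ->
  value (bid g) (c, 2) [set: 'I_m] = 2.
Proof.
by case/andP=> c0 c2; rewrite /value /bS1 /bS2 /= !subsetT (max_r c2) max_l ?ler0n.
Qed.

Lemma value_bid_proper (g : 'I_m) (c : R) (S : {set 'I_m}) : 0 <= c ->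
  S != [set: 'I_m] -> value (bid g) (c, 2) S <= c.
Proof.
move=> c0 hS; rewrite /value /bS1 /bS2 /= subTset (negbTE hS).
by rewrite !ge_max; case: ifP; rewrite ?lexx ?c0.
Qed.

Lemma valid_hard_instance : valid_instance hard_instance.
Proof.
apply/andP; split; first by apply/allP => x /mapP[g _ ->]; rewrite valid_item_of ?ler01.
by rewrite -map_comp map_inj_uniq ?enum_uniq // => g g' [] /val_inj.
Qed.

(* Giving each bidder her own good is feasible and yields welfare m. *)
Lemma OPT_hard_instance : m%:R <= OPT hard_instance.
Proof.
have sI : size hard_instance = m by rewrite size_map size_enum_ord.
have hk (k : 'I_(size hard_instance)) : (k < m)%N by rewrite -{2}sI.
have g0 : 'I_m by exists 0%N; apply: leq_trans hm.
pose f : {ffun 'I_(size hard_instance) -> {set 'I_m}} :=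
  [ffun k : 'I_(size hard_instance) => [set nth g0 (enum 'I_m) k]].
have ff : @alloc_feasible R m hard_instance f.
  apply/forallP => k; apply/forallP => l; apply/implyP => kl.
  by rewrite !ffunE disjoints1 inE nth_uniq ?enum_uniq ?size_enum_ord ?hk.
apply: le_trans (OPT_ge ff).
have -> : m%:R = \sum_(k < size hard_instance) (1 : R).
  by rewrite sumr_const card_ord sI.
apply: ler_sum => k _.
rewrite (nth_map g0) ?size_enum_ord ?hk // ffunE /value /bS1 /bS2 /=.
by rewrite !le_max subxx lexx.
Qed.

(* Truthfulness: if a lone bidder g declaring 0 for {g} received all of U,
   then declaring her true value 1 must also give her U, as otherwise the lie
   would earn her 2 > 1. *)
Lemma truthful_grab (A : mechanism R m) (g : 'I_m) :
  truthful_verif A -> mdec A [::] (item_of 0 g) = [set: 'I_m] ->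
  mdec A [::] (item_of 1 g) = [set: 'I_m].
Proof.
move=> truth grab0; apply/eqP; apply: contraT => refuse1.
have v0 : valid_instance [:: item_of 0 g] by rewrite /valid_instance /= valid_item_of.
have v1 : valid_instance [:: item_of 1 g] by rewrite /valid_instance /= valid_item_of ?ler01.
have := truth (bid g) [::] (1, 2) (0, 2) _ _ v1 v0
  (run_single A (item_of 0 g)) (run_single A (item_of 1 g)).
rewrite /alloc /= eqxx grab0 !value_bid_setT ?lexx ?ler0n ?ler01 ?ler1n //.
move=> /(_ isT) le2; have := le_trans le2 (value_bid_proper g ler01 refuse1).
by rewrite leNgt ltr1n.
Qed.

End HardInstance.

Theorem theorem15 (R : realFieldType) (m : nat) (hm : (2 <= m)%N)
    (delta : R) (hdelta : 0 < delta) (A : mechanism R m)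
    (hA : is_priority_mechanism A) (htruth : truthful_verif A) :
  exists (I : seq (item R m)) (H : history R m),
    [/\ valid_instance I, run A I [::] H &
        (1 - delta) * m%:R / 2 * hist_welfare H < OPT I].
Proof.
have vI := valid_hard_instance R hm.
have [H runH] := run_total hA.1 [::] (proj1 (andP vI)).
have neI : hard_instance R m != [::].
  by rewrite -size_eq0 size_map size_enum_ord -lt0n; apply: leq_trans hm.
have [_ /mapP[g _ ->] [t [EH tI]]] := run_first runH neI.
have [grab1 | refuse1] := eqVneq (mdec A [::] (item_of 1 g)) [set: 'I_m].
- exists (hard_instance R m), H; split => //.
  have vt p : p \in t -> valid_bidder p.1.1.
    by move/tI; move/allP: (proj1 (andP vI)) => vall /vall /and3P[].
  have feasH := hA.2 _ _ vI runH.
  rewrite EH /= grab1 in feasH *.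
  rewrite hist_welfare_grab // value_bid_setT ?ler01 ?ler1n //.
  apply: lt_le_trans (OPT_hard_instance R hm).
  have m_pos : 0 < m%:R :> R by rewrite ltr0n; apply: leq_trans hm.
  rewrite divfK ?pnatr_eq0 // mulrBl mul1r gtrBl.
  exact: mulr_gt0.
- have refuse0 : mdec A [::] (item_of 0 g) != [set: 'I_m].
    by apply: contra_neq refuse1 => /(truthful_grab hm htruth).
  set x0 : item R m := item_of 0 g.
  exists [:: x0], [:: (x0, mdec A [::] x0)].
  split; first by rewrite /valid_instance /= valid_item_of ?lexx.
    exact: run_single.
  have w0 : hist_welfare [:: (x0, mdec A [::] x0)] = 0.
    apply/eqP; rewrite /hist_welfare big_seq1 eq_le value_bid_proper //=.
    by rewrite /value le_max lexx orbT.
  rewrite w0 mulr0; apply: lt_le_trans (OPT_single _).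
  by rewrite value_bid_setT ?lexx ?ler0n // ltr0n.
Qed.
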